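(* Let $n\ge 1$ and let $\mathcal F_{Acaa}(X_1,\dots,X_n)=\bigoplus_{k\ge1}\mathcal F^k_{Acaa}(X_1,\dots,X_n)$ be the free Acaa-algebra over a field $\mathbb K$ of characteristic $0$ on generators $X_1,\dots,X_n$, graded by degree in the generators. Then: $\mathcal F^1_{Acaa}$ is spanned by $X_1,\dots,X_n$; $\mathcal F^2_{Acaa}$ is spanned by the elements $[X_i,X_j]$ with $1\le i<j\le n$; $\mathcal F^3_{Acaa}$ is spanned by the elements $[X_i,[X_j,X_k]]$ with $1\le i<j<k\le n$; and $\mathcal F^k_{Acaa}(X_1,\dots,X_n)=0$ for all $k\ge 4$.
   Context: An Acaa-algebra over a field $\mathbb K$ of characteristic $0$ is a $\mathbb K$-vector space $A$ with a bilinear product $[\cdot,\cdot]$ which is anticommutative, $[x,y]=-[y,x]$, and satisfies $[x_1,[x_2,x_3]]=[x_2,[x_3,x_1]]$ for all $x_1,x_2,x_3\in A$. The free Acaa-algebra on $X_1,\dots,X_n$ is the quotient of the free nonassociative algebra on $X_1,\dots,X_n$ by the ideal generated by these identities; it is graded by the number of generators in a monomial, $\mathcal F^k_{Acaa}$ denoting the degree-$k$ homogeneous component. *)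

From mathcomp Require Import all_boot all_algebra.
Set Implicit Arguments. Unset Strict Implicit. Unset Printing Implicit Defensive.
Import GRing.Theory.
Local Open Scope ring_scope.

Section AcaaFree.
Variables (K : fieldType) (n : nat).

Inductive term : Type :=
| TGen : 'I_n -> term
| TZero : term
| TAdd : term -> term -> term
| TScale : K -> term -> term
| TMul : term -> term -> term.

(* The congruence defining the free Acaa-algebra: the K-vector-space axioms,
   bilinearity of the product (giving the free nonassociative algebra),
   plus all substitution instances of the Acaa identities
   [x,y] = -[y,x]  and  [x1,[x2,x3]] = [x2,[x3,x1]]. The free Acaa-algebra
   is term / acaa_eqv. *)
Inductive acaa_eqv : term -> term -> Prop :=
| ae_refl t : acaa_eqv t t
| ae_sym t u : acaa_eqv t u -> acaa_eqv u t
| ae_trans t u v : acaa_eqv t u -> acaa_eqv u v -> acaa_eqv t v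
| ae_add t t' u u' : acaa_eqv t t' -> acaa_eqv u u' -> acaa_eqv (TAdd t u) (TAdd t' u')
| ae_scale a t t' : acaa_eqv t t' -> acaa_eqv (TScale a t) (TScale a t')
| ae_mul t t' u u' : acaa_eqv t t' -> acaa_eqv u u' -> acaa_eqv (TMul t u) (TMul t' u')
| ae_addA t u v : acaa_eqv (TAdd t (TAdd u v)) (TAdd (TAdd t u) v)
| ae_addC t u : acaa_eqv (TAdd t u) (TAdd u t)
| ae_add0 t : acaa_eqv (TAdd t TZero) t
| ae_scale1 t : acaa_eqv (TScale 1 t) t
| ae_scale0 t : acaa_eqv (TScale 0 t) TZero
| ae_scaleA a b t : acaa_eqv (TScale a (TScale b t)) (TScale (a * b) t)
| ae_scaleDl a b t : acaa_eqv (TScale (a + b) t) (TAdd (TScale a t) (TScale b t))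
| ae_scaleDr a t u : acaa_eqv (TScale a (TAdd t u)) (TAdd (TScale a t) (TScale a u))
| ae_mulDl t u v : acaa_eqv (TMul (TAdd t u) v) (TAdd (TMul t v) (TMul u v))
| ae_mulDr t u v : acaa_eqv (TMul t (TAdd u v)) (TAdd (TMul t u) (TMul t v))
| ae_mulZl a t u : acaa_eqv (TMul (TScale a t) u) (TScale a (TMul t u))
| ae_mulZr a t u : acaa_eqv (TMul t (TScale a u)) (TScale a (TMul t u))
| ae_anticomm x y : acaa_eqv (TMul x y) (TScale (-1) (TMul y x))
| ae_cyclic x1 x2 x3 :
    acaa_eqv (TMul x1 (TMul x2 x3)) (TMul x2 (TMul x3 x1)).

Inductive mon : Type :=
| MGen : 'I_n -> mon
| MMul : mon -> mon -> mon.

Fixpoint mdeg (m : mon) : nat :=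
  match m with MGen _ => 1%N | MMul a b => (mdeg a + mdeg b)%N end.

Fixpoint mon_term (m : mon) : term :=
  match m with MGen i => TGen i | MMul a b => TMul (mon_term a) (mon_term b) end.

End AcaaFree.

Arguments TZero {K n}.

From mathcomp Require Import all_boot all_algebra.
From mathcomp Require Import zify.
From Stdlib Require Import Setoid Morphisms.
Set Implicit Arguments. Unset Strict Implicit. Unset Printing Implicit Defensive.
Import GRing.Theory.
Local Open Scope ring_scope.

(* Cyclicity and anticommutativity give anti-associativity x(yz) = -(xy)z.
   Hence (xy)(zw) is antisymmetric in x, y and invariant under rotating y, z, w,
   which forces (xy)(zw) = (zw)(xy) = -(xy)(zw).  Once 2 is invertible every
   product of two brackets vanishes, and with it every monomial of degree at
   least 4.  In degree 3, x(yz) is alternating in x, y, z, so the brackets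
   [X_i,[X_j,X_k]] with i < j < k span. *)

Section Monomials.
Variable n : nat.

Lemma mdeg_gt0 (m : mon n) : (0 < mdeg m)%N.
Proof. by elim: m => //= u IHu v _; rewrite addn_gt0 IHu. Qed.

Lemma mon_deg1 (m : mon n) : mdeg m = 1%N -> exists i, m = MGen i.
Proof.
case: m => [i|u v] /=; first by exists i.
by have := mdeg_gt0 u; have := mdeg_gt0 v; lia.
Qed.

Lemma mon_deg2 (m : mon n) :
  mdeg m = 2%N -> exists a b, m = MMul (MGen a) (MGen b).
Proof.
case: m => [//|u v] /= deg_uv.
have := mdeg_gt0 u; have := mdeg_gt0 v => v_gt0 u_gt0.
have [a ->] := @mon_deg1 u ltac:(lia).
have [b ->] := @mon_deg1 v ltac:(lia).
by exists a, b.
Qed.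

Lemma mon_deg3 (m : mon n) : mdeg m = 3%N ->
  (exists a b d, m = MMul (MGen a) (MMul (MGen b) (MGen d))) \/
  (exists a b d, m = MMul (MMul (MGen a) (MGen b)) (MGen d)).
Proof.
case: m => [//|u v] /= deg_uv.
have := mdeg_gt0 u; have := mdeg_gt0 v => v_gt0 u_gt0.
have [deg_u|deg_u] : mdeg u = 1%N \/ mdeg u = 2%N by lia.
- have [a ->] := mon_deg1 deg_u.
  have [b [d ->]] := @mon_deg2 v ltac:(lia).
  by left; exists a, b, d.
- have [a [b ->]] := mon_deg2 deg_u.
  have [d ->] := @mon_deg1 v ltac:(lia).
  by right; exists a, b, d.
Qed.

End Monomials.

Section FreeAcaa.
Variables (K : fieldType) (n : nat).
Local Notation T := (term K n).
Local Notation X := (TGen K).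
Local Infix "≡" := (@acaa_eqv K n) (at level 70).

#[global] Instance acaa_eqv_Equivalence : Equivalence (@acaa_eqv K n).
Proof. split; [exact: ae_refl | exact: ae_sym | exact: ae_trans]. Qed.

#[global] Instance TAdd_Proper : Proper (@acaa_eqv K n ==> @acaa_eqv K n ==> @acaa_eqv K n) (@TAdd K n).
Proof. by move=> ? ? ? ? ? ?; apply: ae_add. Qed.

#[global] Instance TMul_Proper : Proper (@acaa_eqv K n ==> @acaa_eqv K n ==> @acaa_eqv K n) (@TMul K n).
Proof. by move=> ? ? ? ? ? ?; apply: ae_mul. Qed.

#[global] Instance TScale_Proper a : Proper (@acaa_eqv K n ==> @acaa_eqv K n) (@TScale K n a).
Proof. by move=> ? ? ?; apply: ae_scale. Qed.

#[local] Hint Resolve ae_refl : core.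

Lemma add0t (t : T) : TAdd TZero t ≡ t.
Proof. by rewrite ae_addC; apply: ae_add0. Qed.

Lemma scalet0 a : TScale a (TZero : T) ≡ TZero.
Proof. by rewrite -{1}(ae_scale0 TZero) ae_scaleA mulr0 ae_scale0. Qed.

Lemma mul0t (t : T) : TMul TZero t ≡ TZero.
Proof. by rewrite -{1}(ae_scale0 TZero) ae_mulZl ae_scale0. Qed.

Lemma mult0 (t : T) : TMul t TZero ≡ TZero.
Proof. by rewrite -{1}(ae_scale0 TZero) ae_mulZr ae_scale0. Qed.

Lemma scaleNN (t : T) : TScale (-1) (TScale (-1) t) ≡ t.
Proof. by rewrite ae_scaleA mulrNN mulr1 ae_scale1. Qed.

Lemma mul_antiassoc (x y z : T) : TMul x (TMul y z) ≡ TScale (-1) (TMul (TMul x y) z).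
Proof. by rewrite ae_cyclic ae_cyclic ae_anticomm. Qed.

Lemma mul_mulC (x y z : T) : TMul x (TMul y z) ≡ TScale (-1) (TMul x (TMul z y)).
Proof. by rewrite [TMul y z]ae_anticomm ae_mulZr. Qed.

Lemma mul_mul_rot (x y z w : T) :
  TMul (TMul x y) (TMul z w) ≡ TMul (TMul x z) (TMul w y).
Proof.
rewrite -[TMul (TMul x y) _]scaleNN -mul_antiassoc.
by rewrite (ae_cyclic y) mul_antiassoc scaleNN.
Qed.

Lemma mul_mul_swap (x y z w : T) :
  TMul (TMul x y) (TMul z w) ≡ TMul (TMul z w) (TMul x y).
Proof.
rewrite mul_mul_rot mul_mul_rot [TMul x w]ae_anticomm ae_mulZl.
by rewrite mul_mul_rot mul_mul_rot [TMul w z]ae_anticomm ae_mulZl scaleNN.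
Qed.

Lemma big_eqv (I : Type) (r : seq I) (P : pred I) (F G : I -> T) :
  (forall i, P i -> F i ≡ G i) ->
  \big[@TAdd K n/TZero]_(i <- r | P i) F i ≡ \big[@TAdd K n/TZero]_(i <- r | P i) G i.
Proof. by move=> FG; apply: big_ind2 => // *; apply: ae_add. Qed.

Lemma big_eqv0 (I : Type) (r : seq I) (P : pred I) (F : I -> T) :
  (forall i, P i -> F i ≡ TZero) -> \big[@TAdd K n/TZero]_(i <- r | P i) F i ≡ TZero.
Proof. by move=> F0; apply: (big_ind (fun t => t ≡ TZero)) => // u v -> ->; apply: ae_add0. Qed.

Lemma scale_big (I : Type) (r : seq I) (P : pred I) (F : I -> T) s :
  TScale s (\big[@TAdd K n/TZero]_(i <- r | P i) F i)
  ≡ \big[@TAdd K n/TZero]_(i <- r | P i) TScale s (F i).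
Proof.
apply: (big_ind2 (fun u v => TScale s u ≡ v)) => // [|u1 u2 v1 v2 <- <-].
- exact: scalet0.
- exact: ae_scaleDr.
Qed.

Lemma big_eqv1 (I : finType) (P : pred I) (F : I -> T) (i0 : I) :
  P i0 -> (forall i, P i -> i != i0 -> F i ≡ TZero) ->
  \big[@TAdd K n/TZero]_(i | P i) F i ≡ F i0.
Proof.
move=> Pi0 F0; have : i0 \in index_enum I by rewrite mem_index_enum.
elim: (index_enum I) (index_enum_uniq I) => [//|j r IHr] /= /andP[j_r r_uniq].
rewrite inE big_cons => /predU1P[i0_j|i0_r].
  subst j; rewrite Pi0 big_seq_cond big_eqv0 ?ae_add0 // => i /andP[i_r Pi].
  by apply: F0 => //; apply: contraNneq j_r => <-.
case: ifP => Pj; last exact: IHr.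
by rewrite F0 ?add0t ?IHr //; apply: contraNneq j_r => ->.
Qed.

Definition span1 (t : T) := exists c : 'I_n -> K,
  t ≡ \big[@TAdd K n/TZero]_(i < n) TScale (c i) (X i).

Definition comb2 (c : 'I_n -> 'I_n -> K) : T :=
  \big[@TAdd K n/TZero]_(i < n) \big[@TAdd K n/TZero]_(j < n | (i < j)%N)
    TScale (c i j) (TMul (X i) (X j)).

Definition span2 (t : T) := exists c, t ≡ comb2 c.

Definition comb3 (c : 'I_n -> 'I_n -> 'I_n -> K) : T :=
  \big[@TAdd K n/TZero]_(i < n) \big[@TAdd K n/TZero]_(j < n | (i < j)%N)
    \big[@TAdd K n/TZero]_(k < n | (j < k)%N)
      TScale (c i j k) (TMul (X i) (TMul (X j) (X k))).

Definition span3 (t : T) := exists c, t ≡ comb3 c.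

Lemma span1_gen (a : 'I_n) : span1 (X a).
Proof.
exists (fun i => (i == a)%:R); symmetry.
rewrite (big_eqv1 _ (i0 := a)) // ?eqxx ?ae_scale1 // => i _ /negbTE->.
exact: ae_scale0.
Qed.

Lemma span2_eqv t u : t ≡ u -> span2 u -> span2 t.
Proof. by move=> tu [c uc]; exists c; rewrite tu. Qed.

Lemma span2_scale s t : span2 t -> span2 (TScale s t).
Proof.
move=> [c tc]; exists (fun i j => s * c i j).
rewrite tc /comb2 scale_big; apply: big_eqv => i _.
by rewrite scale_big; apply: big_eqv => j _; apply: ae_scaleA.
Qed.

Lemma span2_0 : span2 TZero.
Proof.
exists (fun _ _ => 0); symmetry.
by apply: big_eqv0 => i _; apply: big_eqv0 => j _; apply: ae_scale0.
Qed.

Lemma span2_basis (a b : 'I_n) : (a < b)%N -> span2 (TMul (X a) (X b)).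
Proof.
move=> ab; exists (fun i j => ((i == a) && (j == b))%:R); symmetry.
rewrite /comb2 (big_eqv1 _ (i0 := a)) // => [|i _ /negbTE ia].
  rewrite (big_eqv1 _ (i0 := b)) // ?eqxx ?ae_scale1 // => j _ /negbTE->.
  by rewrite andbF ae_scale0.
by apply: big_eqv0 => j _; rewrite ia ae_scale0.
Qed.

Lemma span3_eqv t u : t ≡ u -> span3 u -> span3 t.
Proof. by move=> tu [c uc]; exists c; rewrite tu. Qed.

Lemma span3_scale s t : span3 t -> span3 (TScale s t).
Proof.
move=> [c tc]; exists (fun i j k => s * c i j k).
rewrite tc /comb3 scale_big; apply: big_eqv => i _.
rewrite scale_big; apply: big_eqv => j _.
by rewrite scale_big; apply: big_eqv => k _; apply: ae_scaleA.
Qed.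

Lemma span3_0 : span3 TZero.
Proof.
exists (fun _ _ _ => 0); symmetry.
by do 3![apply: big_eqv0 => ? _]; apply: ae_scale0.
Qed.

Lemma span3_basis (a b d : 'I_n) : (a < b)%N -> (b < d)%N ->
  span3 (TMul (X a) (TMul (X b) (X d))).
Proof.
move=> ab bd; exists (fun i j k => [&& i == a, j == b & k == d]%:R); symmetry.
rewrite /comb3 (big_eqv1 _ (i0 := a)) // => [|i _ /negbTE ia]; last first.
  by do 2![apply: big_eqv0 => ? _]; rewrite ia ae_scale0.
rewrite (big_eqv1 _ (i0 := b)) // => [|j _ /negbTE jb]; last first.
  by apply: big_eqv0 => ? _; rewrite jb andbF ae_scale0.
rewrite (big_eqv1 _ (i0 := d)) // ?eqxx ?ae_scale1 // => k _ /negbTE->.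
by rewrite !andbF ae_scale0.
Qed.

Lemma mon_deg3_eqv (m : mon n) : mdeg m = 3%N ->
  exists s a b d, mon_term K m ≡ TScale s (TMul (X a) (TMul (X b) (X d))).
Proof.
case/mon_deg3 => [[a [b [d ->]]]|[a [b [d ->]]]].
- by exists 1, a, b, d; rewrite ae_scale1.
- by exists (-1), d, a, b; apply: ae_anticomm.
Qed.

Section CharNot2.
Hypothesis two_neq0 : (2%:R : K) != 0.

Lemma eqv_opp_self0 (t : T) : t ≡ TScale (-1) t -> t ≡ TZero.
Proof.
move=> t_opp.
have two_t : TScale 2%:R t ≡ TZero.
  rewrite mulr2n ae_scaleDl ae_scale1 {2}t_opp -{1}(ae_scale1 t).
  by rewrite -ae_scaleDl subrr ae_scale0.
by rewrite -(ae_scale1 t) -(mulVf two_neq0) -ae_scaleA two_t scalet0.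
Qed.

Lemma mul_sqr0 (x : T) : TMul x x ≡ TZero.
Proof. exact/eqv_opp_self0/ae_anticomm. Qed.

Lemma mul_mul_same0 (x y : T) : TMul x (TMul x y) ≡ TZero.
Proof. by apply: eqv_opp_self0; rewrite {1}ae_cyclic mul_mulC. Qed.

Lemma mul_mul0 (x y z w : T) : TMul (TMul x y) (TMul z w) ≡ TZero.
Proof. by apply: eqv_opp_self0; rewrite {1}mul_mul_swap ae_anticomm. Qed.

Lemma mul_mul_mul0 (x y z w : T) : TMul x (TMul y (TMul z w)) ≡ TZero.
Proof. by rewrite mul_antiassoc mul_mul0 scalet0. Qed.

Lemma span2_gens (a b : 'I_n) : span2 (TMul (X a) (X b)).
Proof.
case: (ltngtP a b) => [|ba|/val_inj->]; first exact: span2_basis.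
- exact/(span2_eqv (ae_anticomm _ _))/span2_scale/span2_basis.
- exact/(span2_eqv (mul_sqr0 _))/span2_0.
Qed.

Lemma span3_gens (a b d : 'I_n) : span3 (TMul (X a) (TMul (X b) (X d))).
Proof.
have span3_eqv0 t : t ≡ TZero -> span3 t by move/span3_eqv; apply; apply: span3_0.
wlog ab : a b d / (a < b)%N => [ordered|].
  case: (ltngtP a b) => [|ba|/val_inj->]; first exact: ordered.
  - apply: (span3_eqv (ae_cyclic _ _ _)); apply: (span3_eqv (mul_mulC _ _ _)).
    exact/span3_scale/ordered.
  - exact/span3_eqv0/mul_mul_same0.
case: (ltngtP b d) => [|db|/val_inj->]; first exact: span3_basis.
- case: (ltngtP a d) => [ad|da|/val_inj->].
  + exact/(span3_eqv (mul_mulC _ _ _))/span3_scale/span3_basis.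
  + apply: (span3_eqv (ae_cyclic _ _ _)); apply: (span3_eqv (ae_cyclic _ _ _)).
    exact: span3_basis.
  + by apply: span3_eqv0; rewrite ae_cyclic mul_sqr0 mult0.
- by apply: span3_eqv0; rewrite mul_sqr0 mult0.
Qed.

Lemma mul_mon_deg3_0 (t : T) (m : mon n) : mdeg m = 3%N -> TMul t (mon_term K m) ≡ TZero.
Proof.
move=> /mon_deg3_eqv[s [a [b [d ->]]]].
by rewrite ae_mulZr mul_mul_mul0 scalet0.
Qed.

Lemma mon_deg_ge4_0 (m : mon n) : (4 <= mdeg m)%N -> mon_term K m ≡ TZero.
Proof.
elim: m => [//|u IHu v IHv] /= deg_uv.
have := mdeg_gt0 u; have := mdeg_gt0 v => v_gt0 u_gt0.
have [u_ge4|u_lt4] := leqP 4 (mdeg u); first by rewrite IHu // mul0t.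
have [v_ge4|v_lt4] := leqP 4 (mdeg v); first by rewrite IHv // mult0.
have [deg_v|[deg_u|[deg_u deg_v]]] :
    mdeg v = 3%N \/ mdeg u = 3%N \/ mdeg u = 2%N /\ mdeg v = 2%N by lia.
- exact: mul_mon_deg3_0.
- by rewrite ae_anticomm mul_mon_deg3_0 // scalet0.
- have [a [b ->]] := mon_deg2 deg_u; have [c [d ->]] := mon_deg2 deg_v.
  exact: mul_mul0.
Qed.

End CharNot2.

End FreeAcaa.

Theorem mainTheorem6 (K : fieldType) (hK : [pchar K] =i pred0) (n : nat) (hn : (0 < n)%N) :
  (forall m : mon n, mdeg m = 1%N ->
     exists c : 'I_n -> K,
       acaa_eqv (mon_term K m)
         (\big[@TAdd K n/TZero]_(i < n) TScale (c i) (TGen K i)))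
  /\ (forall m : mon n, mdeg m = 2%N ->
     exists c : 'I_n -> 'I_n -> K,
       acaa_eqv (mon_term K m)
         (\big[@TAdd K n/TZero]_(i < n) \big[@TAdd K n/TZero]_(j < n | (i < j)%N)
             TScale (c i j) (TMul (TGen K i) (TGen K j))))
  /\ (forall m : mon n, mdeg m = 3%N ->
     exists c : 'I_n -> 'I_n -> 'I_n -> K,
       acaa_eqv (mon_term K m)
         (\big[@TAdd K n/TZero]_(i < n) \big[@TAdd K n/TZero]_(j < n | (i < j)%N)
            \big[@TAdd K n/TZero]_(k < n | (j < k)%N)
             TScale (c i j k) (TMul (TGen K i) (TMul (TGen K j) (TGen K k)))))
  /\ (forall m : mon n, (4 <= mdeg m)%N -> acaa_eqv (mon_term K m) TZero).
Proof.
have two_neq0 : (2%:R : K) != 0 by rewrite (pcharf0P _).1.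
split; [|split; [|split]].
- by move=> m /mon_deg1[i ->]; apply: span1_gen.
- by move=> m /mon_deg2[a [b ->]]; apply: span2_gens.
- move=> m /(mon_deg3_eqv K)[s [a [b [d mE]]]].
  exact/(span3_eqv mE)/span3_scale/span3_gens.
- exact: mon_deg_ge4_0.
Qed.
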